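(* Let $p$ be a prime, $h\in\mathbb{Z}[x]$ monic, and $m\in\mathbb{Z}_p$. Then: (1) $\widehat\chi_t^{(h)}(m)$ is a nonnegative integer for every real $t>0$; (2) $\widehat\chi_t^{(h)}(m)$ is nonincreasing in $t$; (3) $v_p(h(m))=\int_0^\infty\chi_t^{(h)}(m)\,dt=\sum_{t=1}^\infty\widehat\chi_t^{(h)}(m)$ (as elements of $[0,\infty]$).
   Context: $v_p$ is the $p$-adic valuation extended to $\overline{\mathbb{Q}_p}$. For monic $h=\prod_i(x-\delta_i)$ over $\overline{\mathbb{Q}_p}$ (roots with multiplicity), $m\in\mathbb{Z}_p$, $t\ge0$: $\chi_t^{(h)}(m)=\#\{i:v_p(m-\delta_i)\ge t\}$, and for real $t>0$, $\widehat\chi_t^{(h)}(m)=\int_{\lceil t\rceil-1}^{\lceil t\rceil}\chi_s^{(h)}(m)\,ds$. *)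

From HB Require Import structures.
From mathcomp Require Import all_boot all_order all_algebra.
From mathcomp Require Import all_classical all_reals all_analysis.
Set Implicit Arguments. Unset Strict Implicit. Unset Printing Implicit Defensive.
Import Order.TTheory GRing.Theory Num.Theory.
Local Open Scope ring_scope.
Local Open Scope classical_set_scope.

(* Axiomatic description of (Qbar_p, v_p) together with the subfield Q_p:
   K is an algebraically closed field, v : K -> \bar R a valuation
   (v x = +oo iff x = 0), Qp a subfield of K over which K is algebraic,
   Qp is complete for v, v(Qp^x) is contained in Z, v(p) = 1 and the
   residue field of Qp is represented by the integers.  Any such data is
   isomorphic to (\overline{Q_p}, v_p, Q_p). *)
Definition is_padic_closure (p : nat) (R : realType) (K : closedFieldType)
    (v : K -> \bar R) (Qp : {pred K}) : Prop :=
  [/\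
      [/\ v 0 = +oo%E,
      (forall x : K, x != 0 -> exists r : R, v x = r%:E),
      (forall x y : K, v (x * y) = (v x + v y)%E) &
      (forall x y : K, (Order.min (v x) (v y) <= v (x + y)%R)%E)],
      [/\ 0 \in Qp, 1 \in Qp,
          (forall x y, x \in Qp -> y \in Qp -> x - y \in Qp),
          (forall x y, x \in Qp -> y \in Qp -> x * y \in Qp) &
          (forall x, x \in Qp -> x^-1 \in Qp)],
      (forall x : K, exists q : {poly K},
          [/\ q != 0, q \is a polyOver Qp & root q x]) &
      [/\
          (forall x, x \in Qp -> x != 0 -> exists n : int, v x = (n%:~R : R)%:E),
          v p%:R = 1%E,
          (* residue field of Qp is given by the integers *)
          (forall x, x \in Qp -> (0 <= v x)%E ->
              exists n : nat, (1 <= v (x - n%:R)%R)%E) &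
          (forall u : nat -> K, (forall n, u n \in Qp) ->
             (forall M : R, exists N : nat, forall i j : nat, (N <= i)%N -> (N <= j)%N ->
                 (M%:E <= v (u i - u j)%R)%E) ->
             exists2 l, l \in Qp &
               forall M : R, exists N : nat, forall n : nat, (N <= n)%N ->
                 (M%:E <= v (u n - l)%R)%E)]].

(* chi_t^{(h)}(m) = #{ i : v(m - delta_i) >= t }, for the root list rs of h *)
Definition chi (R : realType) (K : fieldType) (v : K -> \bar R)
    (rs : seq K) (m : K) (t : R) : nat :=
  count (fun d => (t%:E <= v (m - d)%R)%E) rs.

Definition chihat (R : realType) (K : fieldType) (v : K -> \bar R)
    (rs : seq K) (m : K) (t : R) : \bar R :=
  (\int[@lebesgue_measure R]_(s in `[((Num.ceil t - 1)%:~R : R), (Num.ceil t)%:~R])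
      ((chi v rs m s)%:R : R)%:E)%E.

(* A root delta contributes to chi_s(m) exactly for s <= v(m - delta), so
   hat chi_t(m) is the sum over the roots of the length of
   [ceil t - 1, ceil t] /\ (-oo, v(m - delta)], that is of
   min(v(m - delta), ceil t) - min(v(m - delta), ceil t - 1).  Monotonicity and
   the two formulas for v(h(m)) = sum_delta v(m - delta) then hold root by root.
   Integrality comes from Gauss's lemma: h(p^k x + m) = prod_delta (p^k x + (m - delta))
   has coefficients in Z_p, and its Gauss valuation sum_delta min(v(m - delta), k)
   is therefore a natural number; the case k = 0 shows v(m - delta) >= 0. *)

From HB Require Import structures.
From mathcomp Require Import all_boot all_order all_algebra.
From mathcomp Require Import all_classical all_reals all_analysis.
From mathcomp Require Import lra zify.
Import Order.TTheory GRing.Theory Num.Theory.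
Local Open Scope ring_scope.
Local Open Scope classical_set_scope.

Section FineMin.
Context {R : realType}.

Definition fine_min (a : \bar R) (x : R) : R := fine (mine a x%:E).

Lemma fine_min_EFin (r x : R) : fine_min r%:E x = Num.min r x.
Proof. by rewrite /fine_min -EFin_min. Qed.

Lemma fine_min_pinfty (x : R) : fine_min +oo x = x.
Proof. by rewrite /fine_min minye. Qed.

Lemma fine_min_ninfty (x : R) : fine_min -oo x = 0.
Proof. by rewrite /fine_min minNye. Qed.

Lemma fine_min_le (a : \bar R) : {homo fine_min a : x y / x <= y}.
Proof.
move=> x y xy; case: a => [r||]; rewrite ?fine_min_pinfty ?fine_min_ninfty //.
by rewrite !fine_min_EFin le_min2.
Qed.

Lemma fine_min_le_id (a : \bar R) (x : R) : a != -oo%E -> fine_min a x <= x.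
Proof.
by case: a => [r||] _ //; rewrite ?fine_min_EFin ?fine_min_pinfty // ge_min lexx orbT.
Qed.

Lemma fine_min_ge0 (a : \bar R) : a != -oo%E -> (0 <= fine_min a 0) = (0 <= a)%E.
Proof.
by case: a => [r||] _ //;
  rewrite ?fine_min_EFin ?fine_min_pinfty ?leey ?le_min ?lexx ?andbT.
Qed.

Lemma fine_min_step_antitone (a : \bar R) (x y : R) : x <= y ->
  fine_min a y - fine_min a (y - 1) <= fine_min a x - fine_min a (x - 1).
Proof.
move=> xy; case: a => [r||]; rewrite ?fine_min_pinfty ?fine_min_ninfty ?subrr //; last lra.
rewrite !fine_min_EFin.
by case: (ltP r x) => ?; case: (ltP r y) => ?; case: (ltP r (x - 1)) => ?;
  case: (ltP r (y - 1)) => ?; lra.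
Qed.

Lemma sum_fine_min_step (a : \bar R) (n : nat) : (0 <= a)%E ->
  \sum_(1 <= k < n.+1) (fine_min a k%:R - fine_min a (k%:R - 1)) = fine_min a n%:R.
Proof.
move=> a0; elim: n => [|n IH]; last first.
  by rewrite big_nat_recr //= IH -natr1 addrK addrC subrK.
rewrite big_geq //; case: a a0 => [r||] //= r0.
by rewrite fine_min_EFin min_r // -lee_fin.
Qed.

Lemma eseries_fine_min_step (a : \bar R) : (0 <= a)%E ->
  (\sum_(1 <= k <oo) (fine_min a k%:R - fine_min a (k%:R - 1))%:E)%E = a.
Proof.
case: a => [r||] // r0.
- apply: lim_near_cst; first exact: ereal_hausdorff.
  exists (Num.truncn r).+2 => // n /= hn; rewrite sumEFin.
  have -> : n = n.-1.+1 by rewrite prednK // (leq_trans _ hn).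
  rewrite sum_fine_min_step // fine_min_EFin min_l //.
  apply: ltW; apply: lt_le_trans (real_truncnS_gt (num_real r)) _.
  by rewrite ler_nat -ltnS prednK // (leq_trans _ hn).
- apply/eqyP => A A0.
  apply: le_trans (nneseries_lim_ge (Num.truncn A).+2 _); last first.
    by move=> k _ _; rewrite lee_fin !fine_min_pinfty subKr ler01.
  rewrite sumEFin /= lee_fin.
  under eq_bigr do rewrite !fine_min_pinfty subKr.
  by rewrite sumr_const_nat subn1 /= ltW // real_truncnS_gt // num_real.
Qed.
End FineMin.

Section LayerCake.
Context {R : realType}.
Local Notation mu := (@lebesgue_measure R).

Definition ray_le (a : \bar R) : set R := [set s | (s%:E <= a)%E].

Lemma ray_le_EFin (r : R) : ray_le r%:E = `]-oo, r].
Proof. by apply/seteqP; split => s; rewrite /ray_le /= in_itv /= lee_fin. Qed.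

Lemma ray_le_pinfty : ray_le +oo = setT.
Proof. by apply/seteqP; split => s // _; rewrite /ray_le /= leey. Qed.

Lemma ray_le_ninfty : ray_le -oo = set0.
Proof. by apply/seteqP; split => s //; rewrite /ray_le /= leeNy_eq. Qed.

Lemma measurable_ray_le (a : \bar R) : measurable (ray_le a).
Proof.
case: a => [r||]; first by rewrite ray_le_EFin; exact: measurable_itv.
- by rewrite ray_le_pinfty; exact: measurableT.
- by rewrite ray_le_ninfty; exact: measurable0.
Qed.

Lemma lebesgue_ray_le_unit (a : \bar R) (x : R) :
  mu (ray_le a `&` `[x - 1, x]) = (fine_min a x - fine_min a (x - 1))%:E.
Proof.
case: a => [r||].
- have -> : ray_le r%:E `&` `[x - 1, x] = `[x - 1, Num.min r x].
    apply/seteqP; split => s; rewrite ray_le_EFin /= !in_itv /= le_min.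
      by move=> [-> /andP[-> ->]].
    by move=> /andP[-> /andP[-> ->]].
  rewrite lebesgue_measure_itv /= lte_fin !fine_min_EFin lt_min.
  have [rx|xr] := lerP r (x - 1).
  + have rx' : r <= x by lra.
    by rewrite (min_l rx') subrr.
  + by rewrite ltrBlDr ltrDl ltr01 EFinB.
- rewrite !fine_min_pinfty ray_le_pinfty setTI lebesgue_measure_itv /= lte_fin.
  by rewrite ltrBlDr ltrDl ltr01 -EFinB opprB addrC subrK.
- by rewrite !fine_min_ninfty subrr ray_le_ninfty set0I measure0.
Qed.

Lemma lebesgue_ray_le_ge0 (a : \bar R) : (0 <= a)%E ->
  mu (ray_le a `&` `[0, +oo[) = a.
Proof.
case: a => [r||] // r0; last by rewrite ray_le_pinfty setTI lebesgue_measure_itv /= ltry.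
have -> : ray_le r%:E `&` `[0, +oo[ = `[0, r].
  apply/seteqP; split => s; rewrite ray_le_EFin /= !in_itv /= ?andbT.
    by move=> [-> ->].
  by move=> /andP[-> ->].
rewrite lebesgue_measure_itv /= lte_fin oppr0 adde0 lee_fin in r0 *.
by case: ltgtP r0 => // <-.
Qed.

Lemma integral_count_le {I : Type} (rs : seq I) (a : I -> \bar R) (D : set R) :
  measurable D ->
  (\int[mu]_(s in D) ((count (fun i => s%:E <= a i)%E rs)%:R : R)%:E
   = \sum_(i <- rs) mu (ray_le (a i) `&` D))%E.
Proof.
move=> mD.
have count_indic s : ((count (fun i => s%:E <= a i)%E rs)%:R : R)%:E
    = (\sum_(i <- rs) (\1_(ray_le (a i)) s)%:E)%E.
  elim: rs => [|i rs IH]; first by rewrite big_nil.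
  rewrite big_cons /= natrD EFinD IH indicE; congr (_ + _)%E.
  have [h|h] := boolP (s%:E <= a i)%E; [rewrite mem_set|rewrite memNset] => //.
  exact/negP.
under eq_integral do rewrite count_indic.
rewrite ge0_integral_sum //.
- by apply: eq_bigr => i _; rewrite integral_indic //; exact: measurable_ray_le.
- move=> i; apply/measurable_realfun.measurable_EFinP.
  by apply: measurable_realfun.measurable_indic; exact: measurable_ray_le.
Qed.
End LayerCake.

Definition trunc_val {R : realType} {K : fieldType} (v : K -> \bar R)
    (rs : seq K) (m : K) (x : R) : R :=
  \sum_(d <- rs) fine_min (v (m - d)) x.

Section ChiHat.
Context {R : realType} {K : fieldType} (v : K -> \bar R) (rs : seq K) (m : K).

Lemma chihat_ceil (t : R) : chihat v rs m t = chihat v rs m (Num.ceil t)%:~R.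
Proof. by rewrite /chihat intrKceil. Qed.

Lemma chihat_intE (z : int) : chihat v rs m z%:~R =
  (\sum_(d <- rs) (fine_min (v (m - d)) z%:~R - fine_min (v (m - d)) (z%:~R - 1)))%:E.
Proof.
rewrite /chihat intrKceil intrB /= (integral_count_le rs (fun d => v (m - d)));
  last exact: measurable_itv.
by rewrite -sumEFin; apply: eq_bigr => d _; rewrite lebesgue_ray_le_unit.
Qed.

Lemma chihat_trunc_val (n : nat) :
  chihat v rs m n.+1%:R = (trunc_val v rs m n.+1%:R - trunc_val v rs m n%:R)%:E.
Proof.
by rewrite (chihat_intE n.+1) /trunc_val sumrB -[n.+1%:~R]/(n.+1%:R) -natr1 addrK.
Qed.

Lemma chihat_nat : (forall k : nat, exists n : nat, trunc_val v rs m k%:R = n%:R) ->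
  forall t : R, 0 < t -> exists n : nat, chihat v rs m t = (n%:R : R)%:E.
Proof.
move=> trunc_nat t t_gt0; rewrite chihat_ceil.
have [n ->] : exists n : nat, Num.ceil t = n.+1%:Z.
  by move: t_gt0; rewrite -ceil_gt0; case: (Num.ceil t) => [[|n]|] //; exists n.
rewrite -[n.+1%:~R]/(n.+1%:R : R) chihat_trunc_val.
have [N1 tv1] := trunc_nat n.+1; have [N0 tv0] := trunc_nat n.
have N01 : (N0 <= N1)%N.
  by rewrite -(ler_nat R) -tv1 -tv0; apply: ler_sum => d _; rewrite fine_min_le // ler_nat.
by exists (N1 - N0)%N; rewrite tv1 tv0 natrB.
Qed.

Lemma chihat_antitone (s t : R) : s <= t -> (chihat v rs m t <= chihat v rs m s)%E.
Proof.
move=> st; rewrite [chihat _ _ _ t]chihat_ceil [chihat _ _ _ s]chihat_ceil !chihat_intE.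
rewrite lee_fin; apply: ler_sum => d _; apply: fine_min_step_antitone.
by rewrite ler_int le_ceil.
Qed.

Lemma integral_chi : (forall d, d \in rs -> 0 <= v (m - d)%R)%E ->
  (\int[@lebesgue_measure R]_(t in `[0%R : R, +oo[) ((chi v rs m t)%:R : R)%:E)%E
  = (\sum_(d <- rs) v (m - d)%R)%E.
Proof.
move=> rs_ge0; rewrite (integral_count_le rs (fun d => v (m - d)));
  last exact: measurable_itv.
by apply: eq_big_seq => d /rs_ge0; exact: lebesgue_ray_le_ge0.
Qed.

Lemma eseries_chihat : (forall d, d \in rs -> 0 <= v (m - d)%R)%E ->
  (\sum_(1 <= k <oo) chihat v rs m k%:R)%E = (\sum_(d <- rs) v (m - d)%R)%E.
Proof.
move=> rs_ge0.
rewrite (eq_eseriesr (g := fun k => \sum_(d <- rs)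
    (fine_min (v (m - d)) k%:R - fine_min (v (m - d)) (k%:R - 1))%:E)%E); last first.
  by move=> k _; rewrite (chihat_intE k) sumEFin.
rewrite nneseries_sum; last first.
  by move=> k d _; rewrite lee_fin subr_ge0 fine_min_le // gerBl.
by apply: eq_big_seq => d /rs_ge0; exact: eseries_fine_min_step.
Qed.
End ChiHat.

Section Valuation.
Context {R : realType} {K : nzRingType} (v : K -> \bar R).
Hypotheses (v0 : v 0 = +oo%E)
  (v_fin : forall x : K, x != 0 -> exists r : R, v x = r%:E)
  (vM : forall x y : K, v (x * y) = (v x + v y)%E)
  (vD : forall x y : K, (Order.min (v x) (v y) <= v (x + y))%E).

Lemma v_neq_ninfty (x : K) : v x != -oo%E.
Proof. by have [->|/v_fin[r ->]] := eqVneq x 0; rewrite ?v0. Qed.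

Lemma v1 : v 1 = 0%E.
Proof.
have [r vr] := v_fin _ (oner_neq0 K).
by have := vM 1 1; rewrite mulr1 vr -EFinD => -[rr]; congr (_%:E); lra.
Qed.

Lemma vN (x : K) : v (- x) = v x.
Proof.
have [r vr] : exists r, v (-1) = r%:E by apply: v_fin; rewrite oppr_eq0 oner_neq0.
have vN1 : v (-1) = 0%E.
  by have := vM (-1) (-1); rewrite mulrNN mulr1 v1 vr -EFinD => -[rr]; congr (_%:E); lra.
by rewrite -mulN1r vM vN1 add0e.
Qed.

Lemma vB (x y : K) : (Order.min (v x) (v y) <= v (x - y))%E.
Proof. by rewrite -(vN y) vD. Qed.

Lemma v_sum_ge (I : Type) (s : seq I) (P : pred I) (F : I -> K) (c : \bar R) :
  (forall i, P i -> c <= v (F i))%E -> (c <= v (\sum_(i <- s | P i) F i))%E.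
Proof.
move=> F_ge; apply: (big_ind (fun x => c <= v x)%E) => //; first by rewrite v0 leey.
by move=> x y cx cy; apply: le_trans (vD x y); rewrite le_min cx cy.
Qed.

Lemma v_sum_gt (I : Type) (s : seq I) (P : pred I) (F : I -> K) (c : \bar R) :
  c != +oo%E -> (forall i, P i -> c < v (F i))%E -> (c < v (\sum_(i <- s | P i) F i))%E.
Proof.
move=> cy F_gt; apply: (big_ind (fun x => c < v x)%E) => //; first by rewrite v0 ltey.
by move=> x y cx cy'; apply: lt_le_trans (vD x y); rewrite lt_min cx cy'.
Qed.

Lemma v_addr_lt (x y : K) : (v x < v y)%E -> v (x + y) = v x.
Proof.
move=> xy; apply/eqP; rewrite eq_le; apply/andP; split; last first.
  by apply: le_trans (vD x y); rewrite le_min lexx ltW.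
have := vB (x + y) y; rewrite addrK ge_min => /orP[//|yx].
by have := lt_le_trans xy yx; rewrite ltxx.
Qed.

Lemma v_prod (I : Type) (s : seq I) (F : I -> K) :
  v (\prod_(i <- s) F i) = (\sum_(i <- s) v (F i))%E.
Proof. by elim: s => [|i s IH]; rewrite ?big_nil ?v1 // !big_cons vM IH. Qed.

Lemma vX (x : K) (r : R) (n : nat) : v x = r%:E -> v (x ^+ n) = (n%:R * r)%:E.
Proof.
move=> vx; elim: n => [|n IH]; first by rewrite expr0 v1 mul0r.
by rewrite exprSr vM IH vx -EFinD -natr1 mulrDl mul1r.
Qed.

Definition is_gauss_val (f : {poly K}) (r : R) : Prop :=
  (forall j, r%:E <= v f`_j)%E /\ exists j, v f`_j = r%:E.

Lemma is_gauss_val_first {f : {poly K}} {r : R} : is_gauss_val f r ->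
  exists2 j, v f`_j = r%:E & forall i, (i < j)%N -> (r%:E < v f`_i)%E.
Proof.
move=> [f_ge ex_j]; have /ex_minnP[j /eqP fj j_min] : exists j, v f`_j == r%:E.
  by have [j /eqP] := ex_j; exists j.
exists j => // i ij; rewrite lt_neqAle f_ge andbT eq_sym.
by apply: contraTN ij => /j_min; rewrite -leqNgt.
Qed.

Lemma is_gauss_valM (f g : {poly K}) (a b : R) :
  is_gauss_val f a -> is_gauss_val g b -> is_gauss_val (f * g) (a + b).
Proof.
move=> fa gb; have [f_ge _] := fa; have [g_ge _] := gb.
split=> [n|]; first by rewrite coefM EFinD; apply: v_sum_ge => i _; rewrite vM leeD.
have [j fj lt_j] := is_gauss_val_first fa; have [l gl lt_l] := is_gauss_val_first gb.
exists (j + l)%N; rewrite coefM.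
have jl : (j < (j + l).+1)%N by rewrite ltnS leq_addr.
rewrite (bigD1 (Ordinal jl)) //= addKn v_addr_lt vM fj gl ?EFinD //.
rewrite -EFinD; apply: v_sum_gt => // i /= ij; rewrite vM EFinD.
have [lt_ij|le_ji] := ltnP i j; first by apply: lte_leD => //; exact: lt_j.
have lt_ji : (j < i)%N by rewrite ltn_neqAle le_ji andbT eq_sym.
rewrite addeC [X in (_ < X)%E]addeC; apply: lte_leD => //; apply: lt_l.
by move: (ltn_ord i) lt_ji; lia.
Qed.

Lemma is_gauss_val_prod (I : Type) (s : seq I) (F : I -> {poly K}) (r : I -> R) :
  (forall i, is_gauss_val (F i) (r i)) ->
  is_gauss_val (\prod_(i <- s) F i) (\sum_(i <- s) r i).
Proof.
move=> Fr; elim: s => [|i s IH]; last by rewrite !big_cons; exact: is_gauss_valM.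
rewrite !big_nil; split; last by exists 0%N; rewrite coef1 v1.
by move=> j; rewrite coef1; case: (j == 0)%N; rewrite ?v1 // v0 leey.
Qed.

Lemma is_gauss_val_linear (c1 c0 : K) (k : R) : v c1 = k%:E ->
  is_gauss_val (c1 *: 'X + c0%:P) (fine_min (v c0) k).
Proof.
move=> c1k.
have coef j :
    (c1 *: 'X + c0%:P)`_j = if j == 0%N then c0 else if j == 1%N then c1 else 0.
  rewrite coefD coefZ coefX coefC.
  by case: j => [|[|j]]; rewrite /= ?mulr0 ?mulr1 ?addr0 ?add0r.
have := v_neq_ninfty c0; case c0r: (v c0) => [r||] // _.
- rewrite fine_min_EFin; split=> [[|[|j]]|];
    rewrite ?coef /= ?c0r ?c1k ?v0 ?leey ?lee_fin ?ge_min ?lexx ?orbT //.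
  by case: (leP r k) => rk; [exists 0%N | exists 1%N]; rewrite coef /= ?c0r ?c1k.
- rewrite fine_min_pinfty; split=> [[|[|j]]|]; rewrite ?coef /= ?c0r ?c1k ?v0 ?leey //.
  by exists 1%N; rewrite coef /= c1k.
Qed.
End Valuation.

Definition padic_int {R : realType} {K : fieldType} (v : K -> \bar R) (Qp : {pred K}) :
  {pred K} := [pred x | (x \in Qp) && (0 <= v x)%E].

Section PadicIntegers.
Context {p : nat} {R : realType} {K : closedFieldType} {v : K -> \bar R} {Qp : {pred K}}.
Hypothesis hv : is_padic_closure p v Qp.

Let v0 : v 0 = +oo%E. Proof. by case: hv => -[]. Qed.
Let v_fin : forall x : K, x != 0 -> exists r : R, v x = r%:E. Proof. by case: hv => -[]. Qed.
Let vM : forall x y : K, v (x * y) = (v x + v y)%E. Proof. by case: hv => -[]. Qed.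
Let vD : forall x y : K, (Order.min (v x) (v y) <= v (x + y))%E.
Proof. by case: hv => -[]. Qed.

Lemma padic_int_subring_closed : subring_closed (padic_int v Qp).
Proof.
have [_ [_ Q1 QB QM _] _ _] := hv.
rewrite /padic_int; split=> [|x y|x y]; rewrite !inE.
- by rewrite Q1 (v1 v v_fin vM) lexx.
- move=> /andP[Qx vx] /andP[Qy vy]; rewrite QB //=.
  by apply: le_trans (vB v v_fin vM vD x y); rewrite le_min vx vy.
- by move=> /andP[Qx vx] /andP[Qy vy]; rewrite QM //= vM adde_ge0.
Qed.

HB.instance Definition _ :=
  GRing.isSubringClosed.Build K (padic_int v Qp) padic_int_subring_closed.

Lemma is_gauss_val_nat (f : {poly K}) (r : R) :
  f \is a polyOver (padic_int v Qp) -> is_gauss_val v f r -> exists n : nat, r = n%:R.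
Proof.
have [_ _ _ [v_int _ _ _]] := hv.
move=> /polyOverP f_int [_ [j fj]]; have /andP[Qf vf_ge0] := f_int j.
have fj_neq0 : f`_j != 0 by apply/eqP => f0; move: fj; rewrite f0 v0.
have [[n|n] vfj] := v_int _ Qf fj_neq0; first by exists n; move: fj; rewrite vfj => -[].
by move: vf_ge0; rewrite vfj lee_fin NegzE mulrNz oppr_ge0 lern0.
Qed.

Lemma trunc_val_nat {h : {poly int}} {rs : seq K} {m : K} :
  map_poly intr h = \prod_(d <- rs) ('X - d%:P) -> m \in padic_int v Qp ->
  forall k : nat, exists n : nat, trunc_val v rs m k%:R = n%:R.
Proof.
have [_ _ _ [_ vp _ _]] := hv.
move=> hrs m_int k; pose c : K := p%:R ^+ k.
have vc : v c = (k%:R : R)%:E by rewrite (vX v v_fin vM _ _ k vp) mulr1.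
apply: (@is_gauss_val_nat (\prod_(d <- rs) (c *: 'X + (m - d)%:P))).
  have -> : \prod_(d <- rs) (c *: 'X + (m - d)%:P) = map_poly intr h \Po (c *: 'X + m%:P).
    rewrite hrs rmorph_prod; apply: eq_bigr => d _.
    by rewrite /= comp_polyB comp_polyX comp_polyC polyCB addrA.
  apply: polyOver_comp; first by apply/polyOverP => i; rewrite coef_map rpred_int.
  by rewrite rpredD ?polyOverC // polyOverZ ?polyOverX ?rpredX ?rpred_nat.
apply: is_gauss_val_prod => // d.
exact: is_gauss_val_linear.
Qed.

Lemma root_val_ge0 {h : {poly int}} {rs : seq K} {m : K} :
  map_poly intr h = \prod_(d <- rs) ('X - d%:P) -> m \in padic_int v Qp ->
  forall d, d \in rs -> (0 <= v (m - d)%R)%E.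
Proof.
move=> hrs m_int d drs; have [n tv0] := trunc_val_nat hrs m_int 0.
have vmB_neq_ninfty e : v (m - e) != -oo%E := v_neq_ninfty v v0 v_fin _.
rewrite -fine_min_ge0 //.
have : 0 <= trunc_val v rs m 0%:R by rewrite tv0 ler0n.
rewrite /trunc_val (big_rem d drs) /= => /le_trans; apply.
rewrite gerDl; apply: sumr_le0 => e _.
exact: fine_min_le_id.
Qed.
End PadicIntegers.

Theorem mainTheorem13 (p : nat) (R : realType) (K : closedFieldType)
    (v : K -> \bar R) (Qp : {pred K})
    (h : {poly int}) (rs : seq K) (m : K) :
  prime p ->
  is_padic_closure p v Qp ->
  h \is monic ->
  map_poly intr h = \prod_(d <- rs) ('X - d%:P) ->
  m \in Qp -> (0 <= v m)%E ->
  [/\ (forall t : R, 0 < t -> exists n : nat, chihat v rs m t = (n%:R : R)%R%:E),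
      (forall s t : R, 0 < s -> s <= t -> (chihat v rs m t <= chihat v rs m s)%E) &
      (v (map_poly intr h).[m]
         = (\int[@lebesgue_measure R]_(t in `[0%R : R, +oo[) ((chi v rs m t)%:R : R)%R%:E)%E
       /\ v (map_poly intr h).[m]
         = (\sum_(1 <= k <oo) chihat v rs m k%:R)%E)].
Proof.
move=> _ hv _ hrs Qm vm_ge0.
have m_int : m \in padic_int v Qp by rewrite inE Qm vm_ge0.
have rs_ge0 := root_val_ge0 hv hrs m_int.
have [[_ v_fin vM _] _ _ _] := hv.
have vhm : v (map_poly intr h).[m] = (\sum_(d <- rs) v (m - d)%R)%E.
  by rewrite hrs horner_prod (v_prod v v_fin vM); under eq_bigr do rewrite hornerXsubC.
split; first exact/chihat_nat/(trunc_val_nat hv hrs m_int).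
- by move=> s t _; exact: chihat_antitone.
- by rewrite vhm integral_chi // eseries_chihat.
Qed.
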